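(* Let $(X,Y)$ be a minimum $s$-$t$ cut in the flow network $G_N$. Then $A \cap X$ is an optimal seed set, i.e. $\pi(A \cap X) \ge \pi(S)$ for every seed set $S$.
   Context: Let $G=(V,E)$ be a finite undirected graph whose vertices are agents. Each agent $i$ has a criticality parameter $\theta_i \in [0,1]$, and the product has a parameter $\phi \in [0,1]$. Agent $i$ is accepting if $\theta_i \le \phi$ and rejecting if $\theta_i > \phi$. A seed set is a set $S \subseteq V$ of accepting agents. $V(S)$ denotes the set of agents $i$ for which there exist $j \in S$ and a path in $G$ from $i$ to $j$ all of whose internal vertices are accepting (paths of length $0$ allowed, so $S \subseteq V(S)$). $V^+(S)$ is the set of accepting agents in $V(S)$ and $V^-(S)$ the set of rejecting agents in $V(S)$. Given constants $p, q > 0$, the payoff of a seed set $S$ is $\pi(S) = p\,|V^+(S)| - q\,|V^-(S)|$; an optimal seed set is a seed set maximizing $\pi$ over all seed sets. For an accepting agent $i$, the cluster of $i$ is $C_i = V(\{i\})$, its interior is $C_i^o = V^+(\{i\})$, and its boundary is $C_i^b = V^-(\{i\})$. Flow network $G_N$: let $C_1,\dots,C_k$ be the distinct sets of the form $C_i$ ($i$ accepting); their interiors are pairwise disjoint. For each $m$ choose one canonical accepting agent $a_m \in C_m^o$, and let $A = \{a_1,\dots,a_k\}$. Let $R = \bigcup_{m} C_m^b$. The directed network $G_N$ has vertex set $\{s,t\} \cup A \cup R$, an edge $s \to a_m$ of capacity $p\,|C_m^o|$ for each $m$, an edge $r \to t$ of capacity $q$ for each $r \in R$, and an edge $a_m \to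 r$ of infinite capacity whenever $r \in C_m^b$. An $s$-$t$ cut $(X,Y)$ is a partition of the vertex set with $s \in X$, $t \in Y$; its value is the total capacity of edges from $X$ to $Y$, and a minimum cut is one of minimum value. *)

From HB Require Import structures.
From mathcomp Require Import all_boot all_order all_algebra.
From Stdlib Require Import ClassicalEpsilon.
Set Implicit Arguments. Unset Strict Implicit. Unset Printing Implicit Defensive.
Import Order.TTheory GRing.Theory Num.Theory.
Local Open Scope ring_scope.

Definition asbool (P : Prop) : bool :=
  if excluded_middle_informative P then true else false.

Section Model.
Variables (R : realFieldType) (V : finType).
(* e : adjacency relation of the undirected graph G (assumed symmetric in the theorem) *)
Variables (e : rel V) (theta : V -> R) (phi : R).

Definition accepting (i : V) : bool := theta i <= phi.

(* There is a path i = x0, x1, ..., xk = j in G whose internal vertices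
   x1, ..., x(k-1) are all accepting (k = 0 allowed). *)
Definition linked (i j : V) : Prop :=
  exists p : seq V, [/\ path e i p, last i p = j & all accepting (behead (belast i p))].

Definition Vreach (S : {set V}) : {set V} :=
  [set i | asbool (exists2 j, j \in S & linked i j)].
Definition Vplus (S : {set V}) : {set V} := [set i in Vreach S | accepting i].
Definition Vminus (S : {set V}) : {set V} := [set i in Vreach S | ~~ accepting i].

Definition seed_set (S : {set V}) : bool := [forall i in S, accepting i].

Definition payoff (p q : R) (S : {set V}) : R :=
  p * #|Vplus S|%:R - q * #|Vminus S|%:R.

Definition cluster (i : V) : {set V} := Vreach [set i].
Definition interior (i : V) : {set V} := Vplus [set i].
Definition boundary (i : V) : {set V} := Vminus [set i].

Definition canonical_set (A : {set V}) : Prop :=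
  [/\ forall a, a \in A -> accepting a,
      forall i, accepting i -> exists2 a, a \in A & cluster a = cluster i
    & forall a b, a \in A -> b \in A -> cluster a = cluster b -> a = b].

Definition Rset (A : {set V}) : {set V} := \bigcup_(a in A) boundary a.

Definition node := (V + bool)%type.
Definition src : node := inr true.
Definition snk : node := inr false.

Definition GN_verts (A : {set V}) : {set node} :=
  [set src; snk] :|: [set inl v | v in A :|: Rset A].

(* capacity of the edge u -> v: None = no edge, Some None = infinite capacity,
   Some (Some c) = finite capacity c *)
Definition cap (p q : R) (A : {set V}) (u v : node) : option (option R) :=
  match u, v with
  | inr true, inl a => if a \in A then Some (Some (p * #|interior a|%:R)) else None
  | inl r, inr false => if r \in Rset A then Some (Some q) else None
  | inl a, inl r => if (a \in A) && (r \in boundary a) then Some None else None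
  | _, _ => None
  end.

(* An s-t cut (X, Y): X, Y partition the vertex set of G_N, s in X, t in Y.
   We represent it by X; Y is GN_verts A :\: X. *)
Definition is_cut (A : {set V}) (X : {set node}) : bool :=
  [&& X \subset GN_verts A, src \in X & snk \notin X].

Definition crossing (A : {set V}) (X : {set node}) (u v : node) : bool :=
  (u \in X) && (v \in GN_verts A :\: X).

Definition fincap (c : option (option R)) : R :=
  if c is Some (Some x) then x else 0.

(* value of the cut: None = +infinity *)
Definition cut_value (p q : R) (A : {set V}) (X : {set node}) : option R :=
  if [exists u, exists v, crossing A X u v && (cap p q A u v == Some None)]
  then None
  else Some (\sum_u \sum_(v | crossing A X u v) fincap (cap p q A u v)).

Definition le_ext (x y : option R) : bool :=
  match x, y with
  | _, None => true
  | None, Some _ => false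
  | Some a, Some b => a <= b
  end.

Definition min_cut (p q : R) (A : {set V}) (X : {set node}) : Prop :=
  is_cut A X /\ forall X', is_cut A X' -> le_ext (cut_value p q A X) (cut_value p q A X').

Definition seeds_of_cut (A : {set V}) (X : {set node}) : {set V} :=
  A :&: [set v | inl v \in X].

End Model.

From HB Require Import structures.
From mathcomp Require Import all_boot all_order all_algebra.
From mathcomp Require Import ring.
From Stdlib Require Import ClassicalEpsilon.
Set Implicit Arguments. Unset Strict Implicit. Unset Printing Implicit Defensive.
Import Order.TTheory GRing.Theory Num.Theory.
Local Open Scope ring_scope.

(* Clusters of accepting agents are equivalence classes, so every seed set
   reaches exactly what the canonical agents of its clusters reach: seed sets
   may be taken to be subsets T of A.  For such T the cut X_T consisting of s,
   T and the boundaries of T has no infinite edge and costs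
   P - payoff T, where P = sum_a p |C_a^o|.  Conversely any finite cut X must
   contain the boundary of every a in A \cap X, so its cost is at least
   P - payoff (A \cap X).  Minimality of X against X_T gives the theorem. *)

Lemma asboolP (P : Prop) : reflect P (asbool P).
Proof. by rewrite /asbool; case: excluded_middle_informative; constructor. Qed.

Section SeedModel.
Variables (R : realFieldType) (V : finType) (e : rel V) (theta : V -> R) (phi : R).
Hypothesis e_sym : symmetric e.
Local Notation acc := (accepting theta phi).
Local Notation cluster := (cluster e theta phi).

Inductive link : V -> V -> Prop :=
| link_refl i : link i i
| link_edge i j : e i j -> link i j
| link_step i k j : e i k -> acc k -> link k j -> link i j.

Lemma linkedP i j : linked e theta phi i j <-> link i j.
Proof.
split.
  case=> p; elim: p i j => [|k [|y s] IH] i j /= [pth <-].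
  - by move=> _; apply: link_refl.
  - by case/andP: pth => eik _ _; apply: link_edge.
  - case/andP: pth => eik pth /andP[ak al].
    by apply: (link_step eik ak); apply: IH.
elim=> {i j} [i|i j eij|i k j eik ak _ [p [pth lst al]]].
- by exists [::].
- by exists [:: j]; rewrite /= eij.
exists (k :: p); split => //=; first by rewrite eik.
by case: p pth lst al => [|y s] //= _ _ ->; rewrite ak.
Qed.

Lemma link_trans x y z : link x y -> acc y -> link y z -> link x z.
Proof.
elim=> {x y} [x|x y exy|x k y exk ak _ IH] ay yz //.
- exact: link_step exy ay yz.
- exact: link_step exk ak (IH ay yz).
Qed.

Lemma link_sym i j : link i j -> link j i.
Proof.
elim=> {i j} [i|i j eij|i k j eik ak _ IH]; first exact: link_refl.
  by apply: link_edge; rewrite e_sym.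
by apply: link_trans IH ak _; apply: link_edge; rewrite e_sym.
Qed.

Lemma in_cluster a i : i \in cluster a <-> link i a.
Proof.
rewrite inE; split.
  by case/asboolP=> j /set1P -> /linkedP.
by move=> ia; apply/asboolP; exists a; rewrite ?set11 //; apply/linkedP.
Qed.

Lemma cluster_eq a i : acc a -> acc i -> i \in cluster a -> cluster i = cluster a.
Proof.
move=> aa ai /in_cluster ia; apply/setP => x.
apply/idP/idP => /in_cluster xl; apply/in_cluster.
  exact: link_trans xl ai ia.
exact: link_trans xl aa (link_sym ia).
Qed.

Lemma VreachE (S : {set V}) : Vreach e theta phi S = \bigcup_(j in S) cluster j.
Proof.
apply/setP => i; rewrite inE; apply/asboolP/bigcupP => [[j jS /linkedP ij]|[j jS]].
  by exists j => //; apply/in_cluster.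
by move/in_cluster/linkedP; exists j.
Qed.

Lemma VplusE (S : {set V}) :
  Vplus e theta phi S = \bigcup_(j in S) interior e theta phi j.
Proof.
apply/setP => i; rewrite inE VreachE; apply/andP/bigcupP => [[/bigcupP[j jS ij] ai]|].
  by exists j; rewrite // inE ai andbT.
by case=> j jS; rewrite inE => /andP[ij ai]; split => //; apply/bigcupP; exists j.
Qed.

Lemma VminusE (S : {set V}) :
  Vminus e theta phi S = \bigcup_(j in S) boundary e theta phi j.
Proof.
apply/setP => i; rewrite inE VreachE; apply/andP/bigcupP => [[/bigcupP[j jS ij] ri]|].
  by exists j; rewrite // inE ri andbT.
by case=> j jS; rewrite inE => /andP[ij ri]; split => //; apply/bigcupP; exists j.
Qed.

Lemma Vminus_rejecting (S : {set V}) r : r \in Vminus e theta phi S -> ~~ acc r.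
Proof. by case/setIdP. Qed.

Section Canonical.
Variable A : {set V}.
Hypothesis A_can : canonical_set e theta phi A.

Lemma canonical_accepting a : a \in A -> acc a.
Proof. by case: A_can => accA _ _; apply: accA. Qed.

Lemma interior_disjoint a b i : a \in A -> b \in A ->
  i \in interior e theta phi a -> i \in interior e theta phi b -> a = b.
Proof.
case: A_can => accA _ uniqA aA bA.
move=> /setIdP[ia ai] /setIdP[ib _].
apply: uniqA => //.
by rewrite -(cluster_eq (accA a aA) ai ia) (cluster_eq (accA b bA) ai ib).
Qed.

Lemma card_Vplus (T : {set V}) : T \subset A ->
  #|Vplus e theta phi T| = (\sum_(a in T) #|interior e theta phi a|)%N.
Proof.
move=> TA; rewrite VplusE -sum1_card.
under [RHS]eq_bigr do rewrite -sum1_card big_mkcond.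
rewrite big_mkcond [RHS]exchange_big; apply: eq_bigr => i _ /=.
case: ifP => [/bigcupP[a aT ia]|/bigcupP iT]; last first.
  by rewrite big1 // => a aT; case: ifP => // ia; case: iT; exists a.
rewrite (bigD1 a) //= ia big1 ?addn0 // => b /andP[bT ba]; case: ifP => // ib.
by move: ba; rewrite (interior_disjoint (subsetP TA b bT) (subsetP TA a aT) ib ia) eqxx.
Qed.

Lemma seed_set_canonical (S : {set V}) : seed_set theta phi S ->
  exists2 T : {set V}, T \subset A & Vreach e theta phi S = Vreach e theta phi T.
Proof.
move=> /forall_inP accS; case: A_can => _ repA _.
exists [set a in A | [exists i in S, cluster a == cluster i]].
  by apply/subsetP => a /setIdP[].
rewrite !VreachE; apply/setP => x; apply/bigcupP/bigcupP => [[i iS xi]|[a]].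
  have [a aA ca] := repA i (accS i iS).
  by exists a; rewrite ?ca // inE aA; apply/exists_inP; exists i; rewrite ?ca.
by case/setIdP=> _ /exists_inP[i iS /eqP ->]; exists i.
Qed.

Section FlowNetwork.
Variables p q : R.
Local Notation RA := (Rset e theta phi A).
Local Notation interior := (interior e theta phi).
Local Notation boundary := (boundary e theta phi).
Local Notation Vminus := (Vminus e theta phi).
Local Notation payoff := (payoff e theta phi p q).
Local Notation cut_value := (cut_value e theta phi p q A).
Local Notation crossing := (crossing e theta phi A).
Local Notation cap := (cap e theta phi p q A).

Lemma inl_GN_verts v : (inl v \in GN_verts e theta phi A) = (v \in A :|: RA).
Proof.
by rewrite /GN_verts in_setU !inE /= -in_setU; apply: mem_imset => a b [->].
Qed.

Lemma snk_GN_verts : snk V \in GN_verts e theta phi A.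
Proof. by rewrite !inE eqxx orbT. Qed.

Lemma boundary_Rset a r : a \in A -> r \in boundary a -> r \in RA.
Proof. by move=> aA ra; apply/bigcupP; exists a. Qed.

Lemma Vminus_Rset (T : {set V}) : T \subset A -> Vminus T \subset RA.
Proof.
move=> TA; rewrite VminusE; apply/subsetP => r /bigcupP[a aT].
exact: boundary_Rset (subsetP TA a aT).
Qed.

Lemma Rset_rejecting r : r \in RA -> ~~ acc r.
Proof. by case/bigcupP => a _ /Vminus_rejecting. Qed.

Lemma cut_capacityE (X : {set node V}) : is_cut e theta phi A X ->
  \sum_u \sum_(v | crossing X u v) fincap (cap u v) =
  \sum_(a in A | inl a \notin X) p * #|interior a|%:R
  + \sum_(r in RA | inl r \in X) q.
Proof.
case/and3P => _ sX tX.
rewrite big_sumType big_bool /= big1_eq addr0 addrC.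
congr (_ + _).
  rewrite big_sumType /= big1_eq addr0 big_mkcond [RHS]big_mkcond /=.
  apply: eq_bigr => v _; rewrite /crossing in_setD inl_GN_verts in_setU sX /=.
  by case: (v \in A); case: (inl v \in X); case: (v \in RA).
rewrite [RHS]big_mkcond /=; apply: eq_bigr => r _.
rewrite big_mkcond big_sumType big_bool /= big1; last first.
  by move=> v _; case: ifP => //; case: ifP.
rewrite /crossing if_same !add0r in_setD snk_GN_verts (negbTE tX) andbT.
by case: (inl r \in X); case: (r \in RA); rewrite /= ?add0r ?addr0.
Qed.

Definition interior_value (T : {set V}) : R := \sum_(a in T) p * #|interior a|%:R.

Lemma payoff_canonical (T : {set V}) : T \subset A ->
  payoff T = interior_value T - q * #|Vminus T|%:R.
Proof. by move=> TA; rewrite /payoff (card_Vplus TA) natr_sum mulr_sumr. Qed.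

Definition cut_of_seeds (T : {set V}) : {set node V} :=
  [set u | if u is inl v then (v \in T) || (v \in Vminus T) else u == src V].

Lemma in_cut_of_seeds (T : {set V}) v :
  (inl v \in cut_of_seeds T) = (v \in T) || (v \in Vminus T).
Proof. by rewrite inE. Qed.

Lemma cut_of_seeds_is_cut (T : {set V}) :
  T \subset A -> is_cut e theta phi A (cut_of_seeds T).
Proof.
move=> TA; rewrite /is_cut !inE eqxx andbT /=; apply/subsetP => -[v|b]; rewrite inE.
  rewrite inl_GN_verts in_setU => /orP[/(subsetP TA) -> //|vT].
  by rewrite (subsetP (Vminus_Rset TA)) ?orbT.
by move/eqP ->; rewrite !inE eqxx.
Qed.

(* The only infinite edges a -> r have r in the boundary of a, which X_T
   contains along with a; and a rejecting r is never a canonical agent. *)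
Lemma cut_of_seeds_finite (T : {set V}) : T \subset A ->
  ~~ [exists u, exists v, crossing (cut_of_seeds T) u v && (cap u v == Some None)].
Proof.
move=> TA; apply/existsP => -[u /existsP[v /andP[cr cp]]].
case: u v cr cp => [a|[]] [r|[]] //=; try by case: ifP.
rewrite /crossing in_setD; case: ifP => // /andP[aA ra] /and3P[ax rx _] _.
move: ax rx; rewrite !in_cut_of_seeds => /orP[aT|/Vminus_rejecting].
  suff -> : r \in Vminus T by rewrite orbT.
  by rewrite VminusE; apply/bigcupP; exists a.
by rewrite canonical_accepting.
Qed.

Lemma interior_value_sub_payoff (T : {set V}) : T \subset A ->
  interior_value A - payoff T =
  \sum_(a in A | a \notin T) p * #|interior a|%:R + q * #|Vminus T|%:R.
Proof.
move=> TA; rewrite (payoff_canonical TA) /interior_value (bigID (mem T)) /=.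
rewrite (eq_bigl (fun a => a \in T)) => [|a]; first ring.
by rewrite andb_idl // => /(subsetP TA).
Qed.

Lemma cut_of_seeds_value (T : {set V}) : T \subset A ->
  cut_value (cut_of_seeds T) = Some (interior_value A - payoff T).
Proof.
move=> TA; rewrite /cut_value (negbTE (cut_of_seeds_finite TA)).
rewrite (cut_capacityE (cut_of_seeds_is_cut TA)) (interior_value_sub_payoff TA).
congr (Some (_ + _)).
  apply: eq_bigl => a; rewrite in_cut_of_seeds negb_or; case aA: (a \in A) => //=.
  by rewrite (negbTE (contraTN (@Vminus_rejecting T a) (canonical_accepting aA))) andbT.
rewrite (eq_bigl (fun r => r \in Vminus T)) => [|r].
  by rewrite sumr_const mulr_natr.
rewrite in_cut_of_seeds; apply/andP/idP => [[rR /orP[rT|//]]|rV].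
  by move: (Rset_rejecting rR); rewrite canonical_accepting ?(subsetP TA).
by rewrite rV orbT (subsetP (Vminus_Rset TA)).
Qed.

Lemma finite_cut_boundary (X : {set node V}) c a r : cut_value X = Some c ->
  a \in seeds_of_cut A X -> r \in boundary a -> inl r \in X.
Proof.
rewrite /cut_value => + /setIP[aA]; rewrite inE => + aX ra.
case: ifP => // + _; apply: contraFT => rX; apply/existsP; exists (inl a).
apply/existsP; exists (inl r); rewrite /= aA ra /crossing aX in_setD rX.
by rewrite inl_GN_verts in_setU (boundary_Rset aA ra) orbT.
Qed.

Lemma finite_cut_value_ge (X : {set node V}) c :
  0 <= q -> is_cut e theta phi A X -> cut_value X = Some c ->
  interior_value A - payoff (seeds_of_cut A X) <= c.
Proof.
set T := seeds_of_cut A X => q0 cX cv.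
have TA : T \subset A by apply: subsetIl.
move: (cv); rewrite /cut_value; case: ifP => // _ [<-].
rewrite (cut_capacityE cX) (interior_value_sub_payoff TA).
rewrite [X in _ <= X + _](eq_bigl (fun a => (a \in A) && (a \notin T))); last first.
  by move=> a; rewrite !inE; case: (a \in A).
rewrite lerD2l sumr_const -[q *+ _]mulr_natr ler_wpM2l // ler_nat.
apply/subset_leq_card/subsetP => r; rewrite VminusE => /bigcupP[a aT ra].
have aA : a \in A by apply: (subsetP TA).
by rewrite unfold_in (boundary_Rset aA ra) (finite_cut_boundary cv aT ra).
Qed.

End FlowNetwork.
End Canonical.
End SeedModel.

Theorem mainTheorem3 (R : realFieldType) (V : finType) (e : rel V)
    (theta : V -> R) (phi p q : R) (A : {set V}) (X : {set node V}) :
  symmetric e ->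
  (forall i, 0 <= theta i <= 1) -> 0 <= phi <= 1 ->
  0 < p -> 0 < q ->
  canonical_set e theta phi A ->
  min_cut e theta phi p q A X ->
  seed_set theta phi (seeds_of_cut A X) /\
  forall S : {set V}, seed_set theta phi S ->
    payoff e theta phi p q S <= payoff e theta phi p q (seeds_of_cut A X).
Proof.
move=> e_sym _ _ _ q_gt0 A_can [cutX minX]; split.
  by apply/forall_inP => a /setIP[aA _]; apply: canonical_accepting A_can a aA.
move=> S /(seed_set_canonical A_can)[T TA reachST].
have -> : payoff e theta phi p q S = payoff e theta phi p q T.
  by rewrite /payoff /Vplus /Vminus reachST.
have := minX _ (cut_of_seeds_is_cut e theta phi TA).
rewrite (cut_of_seeds_value e_sym A_can p q TA).
case valX: cut_value => [c|] //= cT.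
have := le_trans (finite_cut_value_ge e_sym A_can (ltW q_gt0) cutX valX) cT.
by rewrite lerD2l lerN2.
Qed.
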